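(* For any $\phi\in\mathrm{Hom}(C(X,\mathbb{Z}),\mathbb{Z})$ with $\phi(1)=0$, there exist a set of horizontal edges $\mathcal H$ (possibly containing several edges between the same pair of vertices, hence possibly bigger than the maximal set) and a choice function $\tau$ such that $\varphi_{\tau,\mathcal H}=\phi$.
   Context: Let $(X,d)$ be an infinite compact ultrametric space, identified with the boundary $\partial\mathcal{T}$ (infinite paths from the root) of its Michon tree $\mathcal{T}=(\mathcal{T}^{(0)},\mathcal{T}^{(1)})$; $K_0(C(X))\cong C(X,\mathbb{Z})$, spanned by the indicator functions $\chi_v$ of the sets of paths through vertices $v$. For a vertex $v$ of level $n$, $\mathcal{T}^{(0)}(v)$ denotes its successors at level $n+1$; horizontal edges of level $n+1$ join distinct vertices of some $\mathcal{T}^{(0)}(v)$. A choice function $\tau:\mathcal{T}^{(0)}\to\partial\mathcal{T}$ satisfies: $\tau(v)$ passes through $v$, and if $w\prec v$ then $\tau(w)=\tau(v)$ iff $\tau(w)$ passes through $v$. Given an oriented set of horizontal edges $\mathcal H=\mathcal H^+\cup\mathcal H^-$ and $\tau$, the even Fredholm module on $\ell^2(\mathcal H^+)\oplus\ell^2(\mathcal H^-)$ with representation $\pi_\tau(f)\psi(h)=f(\tau(s(h)))\psi(h)$ and $F$ having off-diagonal part $T1_h=1_{h^{\mathrm{op}}}$ defines via the Connes pairing the homomorphism $\varphi_{\tau,\mathcal H}:C(X,\mathbb{Z})\to\mathbb{Z}$, $\varphi_{\tau,\mathcal H}(\chi_v)=\sum_{h\in\mathcal H^+}\big(\chi_v(\tau(s(h)))-\chi_v(\tau(r(h)))\big)$.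 One always has $\varphi_{\tau,\mathcal H}(1)=0$. *)

From HB Require Import structures.
From mathcomp Require Import all_boot all_order all_algebra.
From mathcomp Require Import all_classical all_reals.
From mathcomp Require Import numfun.
Set Implicit Arguments. Unset Strict Implicit. Unset Printing Implicit Defensive.
Import Order.TTheory GRing.Theory Num.Theory.
Local Open Scope classical_set_scope.
Local Open Scope ring_scope.

Section Michon.
Context {R : realType} {X : Type} (d : X -> X -> R).

Definition ultrametric : Prop :=
  [/\ forall x y, 0 <= d x y,
      forall x y, d x y = 0 <-> x = y,
      forall x y, d x y = d y x &
      forall x y z, d x z <= Num.max (d x y) (d y z)].

Definition seq_compact : Prop :=
  forall u : nat -> X, exists (phi : nat -> nat) (x : X),
    (forall n, (phi n < phi n.+1)%N) /\
    forall e : R, 0 < e -> exists N, forall n, (N <= n)%N -> d (u (phi n)) x < e.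

Definition infinite_space : Prop := exists f : nat -> X, injective f.

Definition compact_ultrametric_space : Prop :=
  [/\ ultrametric, seq_compact & infinite_space].

(** the set of nonzero distances, and its decreasing enumeration
    r_0 > r_1 > r_2 > ... (r_0 = diam X) *)
Definition dist_set : set R := [set t | exists x y, x <> y /\ t = d x y].

Fixpoint radius (n : nat) : R :=
  match n with
  | 0 => sup dist_set
  | n.+1 => sup [set t | dist_set t /\ t < radius n]
  end.

(** Michon tree: the vertices of level n are the balls
    {y | d x y < r_(n-1)} (level 0 = the root X). *)
Definition ball_at (n : nat) (x : X) : set X :=
  [set y | forall k, (k < n)%N -> d x y < radius k].

Definition is_vertex (n : nat) (B : set X) : Prop := exists x, B = ball_at n x.

Record vertex := Vertex { lvl : nat; vball : set X; vertexP : is_vertex lvl vball }.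

(** an infinite path (a point of X = boundary of the tree) passes through v *)
Definition passes (x : X) (v : vertex) : Prop := vball v x.

Definition chi (v : vertex) : X -> int := \1_(vball v).

Definition prec (w v : vertex) : Prop := (lvl w < lvl v)%N /\ vball v `<=` vball w.

Definition succ (v w : vertex) : Prop := lvl w = (lvl v).+1 /\ vball w `<=` vball v.

Definition horizontal (a b : vertex) : Prop := exists v, [/\ succ v a, succ v b & a <> b].

Definition choice_function (tau : vertex -> X) : Prop :=
  (forall v, passes (tau v) v) /\
  (forall w v, prec w v -> (tau w = tau v <-> passes (tau w) v)).

(** C(X,Z) : continuous (= locally constant) integer valued functions *)
Definition CXZ (f : X -> int) : Prop :=
  forall x, exists2 e : R, 0 < e & forall y, d x y < e -> f y = f x.

Definition is_hom (phi : (X -> int) -> int) : Prop :=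
  forall f g, CXZ f -> CXZ g -> phi (f \+ g) = phi f + phi g.

(** the homomorphism phi_(tau,H) on the generators chi_v, where
    H^+ is the family (s e, r e)_(e : E) of oriented horizontal edges *)
Definition phi_tauH (E : choiceType) (s r : E -> vertex) (tau : vertex -> X)
    (v : vertex) : int :=
  \sum_(e \in [set: E]) (chi v (tau (s e)) - chi v (tau (r e))).

End Michon.

From HB Require Import structures.
From mathcomp Require Import all_boot all_order all_algebra.
From mathcomp Require Import all_classical all_reals numfun.
Set Implicit Arguments.
Unset Strict Implicit.
Unset Printing Implicit Defensive.
Import Order.TTheory GRing.Theory Num.Theory.
Local Open Scope classical_set_scope.
Local Open Scope ring_scope.

(* Choose τ so that it follows one fixed path for as long as possible: on a
   vertex it keeps the value chosen for the parent whenever that path passes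
   through, and otherwise picks a point of the vertex.  Write a(w) = φ(χ_w) and,
   for a non-root vertex w, let w₀ be the sibling of w through which τ(parent w)
   passes.  Joining each w ≠ w₀ to w₀ by |a(w)| parallel horizontal edges,
   oriented by the sign of a(w), gives
   φ_{τ,H}(χ_v) = Σ_w a(w) (χ_v(τ w) - χ_v(τ w₀)).
   For v of level m, with ancestors v_0, ..., v_m = v, only the children w of
   v_0, ..., v_(m-1) contribute.  As χ_(v_n) is the sum of the χ_w over the
   children w of v_n and τ(w₀) = τ(v_n), the children of v_n contribute
   h(n+1) - h(n) with h(k) = a(v_k) χ_v(τ v_k); the sum telescopes to
   a(v) - a(v_0) = φ(χ_v) - φ(1) = φ(χ_v).  Compactness makes every radius
   positive and every vertex have finitely many children, so that only finitely
   many edges contribute to each χ_v. *)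

Lemma increasing_ge (f : nat -> nat) :
  (forall n, (f n < f n.+1)%N) -> forall n, (n <= f n)%N.
Proof. by move=> f_incr; elim=> [//|n IHn]; exact: leq_ltn_trans IHn (f_incr n). Qed.

Section CompactUltrametric.
Variables (R : realType) (X : Type) (d : X -> X -> R).
Hypothesis HX : compact_ultrametric_space d.

Lemma d_ge0 x y : 0 <= d x y. Proof. by case: HX => -[]. Qed.
Lemma d_sym x y : d x y = d y x. Proof. by case: HX => -[]. Qed.
Lemma d_eq0 x y : d x y = 0 <-> x = y. Proof. by case: HX => -[]. Qed.
Lemma d_ultra x y z : d x z <= Num.max (d x y) (d y z). Proof. by case: HX => -[]. Qed.

Lemma d_xx x : d x x = 0. Proof. exact/d_eq0. Qed.

Lemma d_gt0 x y : x <> y -> 0 < d x y.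
Proof. by move=> xy; rewrite lt_neqAle d_ge0 andbT eq_sym; apply/eqP => /d_eq0. Qed.

Lemma ultra_lt x y z r : d x y < r -> d y z < r -> d x z < r.
Proof. by move=> dxy dyz; apply: le_lt_trans (d_ultra x y z) _; rewrite gt_max dxy dyz. Qed.

Lemma exists_dist_lt e : 0 < e -> exists x y, x <> y /\ d x y < e.
Proof.
move=> e_gt0; case: HX => _ dcompact [f f_inj].
have [phi [x [phi_incr phi_cvg]]] := dcompact f.
have [N HN] := phi_cvg e e_gt0.
exists (f (phi N)), (f (phi N.+1)); split.
  by move=> /f_inj eq_phi; have := phi_incr N; rewrite eq_phi ltnn.
by apply: (@ultra_lt _ x); [apply: HN | rewrite d_sym; apply: HN].
Qed.

(* A sequence escaping every ball around [f 0] has no convergent subsequence. *)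
Lemma dist_bounded : exists M, forall x y, d x y <= M.
Proof.
case: HX => _ dcompact [f _]; set o := f 0%N.
apply: contrapT => unbounded.
have far n : exists u, n%:R < d o u.
  apply: contrapT => near_o; apply: unbounded; exists n%:R => x y.
  apply: le_trans (d_ultra x o y) _; rewrite ge_max !leNgt d_sym.
  by apply/andP; split; apply/negP => ?; apply: near_o; [exists x | exists y].
have [u Hu] := choice far.
have [phi [x [phi_incr phi_cvg]]] := dcompact u.
have [N HN] := phi_cvg 1 ltr01.
set K := Num.Def.archi_bound (d o x + 1).
have ox_lt_K : d o x + 1 < K%:R by apply: archi_boundP; rewrite addr_ge0 ?d_ge0.
set n := maxn N K.
have : d o (u (phi n)) < d o x + 1.
  apply: le_lt_trans (d_ultra _ x _) _; rewrite gt_max ltrDl ltr01 /=.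
  by rewrite d_sym; apply: lt_le_trans (HN n (leq_maxl _ _)) _; rewrite lerDr d_ge0.
have : (K <= phi n)%N by exact: leq_trans (leq_maxr N K) (increasing_ge phi_incr n).
rewrite -(ler_nat R) => K_le; have := lt_trans (lt_le_trans ox_lt_K K_le) (Hu (phi n)).
by rewrite ltNge => /negP + /ltW.
Qed.

Lemma dist_set_ubound (S : set R) : S `<=` dist_set d -> has_ubound S.
Proof.
by move=> sS; have [M HM] := dist_bounded; exists M => t /sS [x [y [_ ->]]].
Qed.

Lemma radius_gt0 n : 0 < radius d n.
Proof.
elim: n => [|n IHn] /=.
  case: HX => _ _ [f f_inj]; have f01 : f 0%N <> f 1%N by move=> /f_inj.
  apply: lt_le_trans (d_gt0 f01) _; apply: sup_upper_bound; last by exists (f 0%N), (f 1%N).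
  by split; [exists (d (f 0%N) (f 1%N)); exists (f 0%N), (f 1%N) | exact: dist_set_ubound].
have [x [y [xy dxy]]] := exists_dist_lt IHn.
apply: lt_le_trans (d_gt0 xy) _; apply: sup_upper_bound; last by split=> //; exists x, y.
by split; [exists (d x y); split=> //; exists x, y | apply: dist_set_ubound => t []].
Qed.

Lemma radius_le k n : (k <= n)%N -> radius d n <= radius d k.
Proof.
elim: n => [|n IHn]; first by rewrite leqn0 => /eqP ->.
rewrite leq_eqVlt ltnS => /predU1P[-> //|/IHn]; apply: le_trans.
have [x [y [xy dxy]]] := exists_dist_lt (radius_gt0 n).
by apply: ge_sup => [|t [_ /ltW //]]; exists (d x y); split=> //; exists x, y.
Qed.

Local Notation ball := (ball_at d).

Lemma ball_center n x : ball n x x.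
Proof. by move=> k _; rewrite d_xx radius_gt0. Qed.

Lemma ball_sym n x y : ball n x y -> ball n y x.
Proof. by move=> xy k kn; rewrite d_sym; apply: xy. Qed.

Lemma ball_trans n x y z : ball n x y -> ball n y z -> ball n x z.
Proof. by move=> xy yz k kn; apply: (@ultra_lt _ y); [apply: xy | apply: yz]. Qed.

Lemma ball_le m n x y : (m <= n)%N -> ball n x y -> ball m x y.
Proof. by move=> mn xy k km; apply: xy; exact: leq_trans km mn. Qed.

Lemma ball_eq n x y : ball n x y -> ball n x = ball n y.
Proof.
move=> xy; rewrite predeqE => z; split; first exact: ball_trans (ball_sym xy).
exact: ball_trans xy.
Qed.

Lemma ballS n x y : ball n x y -> d x y < radius d n -> ball n.+1 x y.
Proof. by move=> xy dxy k; rewrite ltnS leq_eqVlt => /predU1P[-> | /xy]. Qed.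

Lemma ball_le_radius n x y : d x y < radius d n -> ball n x y.
Proof. by move=> dxy k kn; apply: lt_le_trans dxy (radius_le (ltnW kn)). Qed.

Definition vertex_at n x : vertex d := Vertex (ex_intro _ x erefl : is_vertex d n (ball n x)).

Lemma vertex_ext (v w : vertex d) : lvl v = lvl w -> vball v = vball w -> v = w.
Proof.
case: v w => [n b bP] [n' b' b'P] /= nn' bb'; subst n' b'.
by rewrite (Prop_irrelevance bP b'P).
Qed.

Lemma vertex_at_eq n x y : vertex_at n x = vertex_at n y <-> ball n x y.
Proof.
split=> [xy | /ball_eq xy]; last by apply: vertex_ext.
by have /= := @ball_center n y; rewrite -[ball n y]/(vball (vertex_at n y)) -xy.
Qed.

Lemma vertex_atP (v : vertex d) x : vball v x -> v = vertex_at (lvl v) x.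
Proof.
case: (vertexP v) => y vy vx; apply: vertex_ext => //=.
by rewrite vy; apply: ball_eq; rewrite -vy.
Qed.

Lemma chi1 (v : vertex d) x : vball v x -> chi v x = 1.
Proof. by move=> vx; rewrite /chi indicE mem_set. Qed.

Lemma chi0 (v : vertex d) x : ~ vball v x -> chi v x = 0.
Proof. by move=> vx; rewrite /chi indicE memNset. Qed.

Variable x0 : X.

Definition point_in (A : set X) : X :=
  if pselect (exists x, A x) is left A_ne then projT1 (cid A_ne) else x0.

Lemma point_inP (A : set X) x : A x -> A (point_in A).
Proof.
move=> Ax; rewrite /point_in; case: pselect => [A_ne|[]]; last by exists x.
exact: projT2 (cid A_ne).
Qed.

Lemma vball_point (v : vertex d) : vball v (point_in (vball v)).
Proof. by case: (vertexP v) => x ->; apply: point_inP (@ball_center _ x). Qed.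

Lemma vertex_at_point (v : vertex d) : v = vertex_at (lvl v) (point_in (vball v)).
Proof. exact/vertex_atP/vball_point. Qed.

(* [anchor n x] is the value of the choice function on the ball of level [n]
   around [x]: it keeps the anchor of the parent ball whenever possible. *)
Fixpoint anchor n x : X :=
  if n is n'.+1 then
    if pselect (ball n x (anchor n' x)) then anchor n' x else point_in (ball n x)
  else x0.

Lemma anchor_in n x : ball n x (anchor n x).
Proof.
case: n => [k //|n] /=; destruct pselect => //.
exact: point_inP (@ball_center _ x).
Qed.

Lemma anchor_ball n x y : ball n x y -> anchor n y = anchor n x.
Proof.
elim: n x y => [//|n IHn] x y xy /=.
by rewrite (IHn x y (ball_le (leqnSn n) xy)) (ball_eq xy).
Qed.

Lemma anchor_stable k n x : (k <= n)%N -> ball n x (anchor k x) -> anchor n x = anchor k x.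
Proof.
elim: n => [|n IHn]; first by rewrite leqn0 => /eqP ->.
rewrite leq_eqVlt ltnS => /predU1P[-> // | kn] xk.
have IH := IHn kn (ball_le (leqnSn n) xk).
by rewrite /= IH; destruct pselect as [|out] => //; rewrite IH in xk.
Qed.

Lemma anchor_anchor n x : anchor n.+1 (anchor n x) = anchor n x.
Proof.
have anchor_idem : anchor n (anchor n x) = anchor n x by apply: anchor_ball; exact: anchor_in.
rewrite /= anchor_idem; destruct pselect as [|out] => //.
by exfalso; apply: out; exact: ball_center.
Qed.

Definition tau_anchor (v : vertex d) : X := anchor (lvl v) (point_in (vball v)).

Lemma tau_anchor_at n x : tau_anchor (vertex_at n x) = anchor n x.
Proof. by apply: anchor_ball; exact: point_inP (@ball_center _ x). Qed.

Lemma tau_anchor_choice : choice_function tau_anchor.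
Proof.
split=> [v | w v [lt_wv sub_vw]].
  by rewrite /passes (vertex_at_point v) tau_anchor_at; exact: anchor_in.
have vx := vball_point v; set x := point_in _ in vx.
rewrite (vertex_atP vx) (vertex_atP (sub_vw _ vx)) !tau_anchor_at /passes /=.
split=> [-> | ]; first exact: anchor_in.
by move=> /(anchor_stable (ltnW lt_wv)) ->.
Qed.

Lemma chi_vertex_at_eq m y p q : (ball m y p <-> ball m y q) ->
  chi (vertex_at m y) p = chi (vertex_at m y) q.
Proof.
move=> pq; case: (pselect (ball m y p)) => yp; first by rewrite !chi1 //; apply/pq.
by rewrite !chi0 // => /pq.
Qed.

(* In an ultrametric space a ball of level [n] either lies in the ball of
   level [m <= n] around [y] or misses it. *)
Lemma chi_const_ball m n y z p q : (m <= n)%N \/ ~ ball n y z ->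
  ball n z p -> ball n z q -> chi (vertex_at m y) p = chi (vertex_at m y) q.
Proof.
move=> alt zp zq; apply: chi_vertex_at_eq; move: alt.
case: (leqP m n) => [mn _ | nm [//|yz]].
- have pq : ball m p q := ball_trans (ball_sym (ball_le mn zp)) (ball_le mn zq).
  by split=> [/ball_trans/(_ pq) | /ball_trans/(_ (ball_sym pq))].
- have out u : ball n z u -> ~ ball m y u.
    by move=> zu /(ball_le (ltnW nm)) yu; apply/yz/(ball_trans yu)/ball_sym.
  by split=> [/(out _ zp) | /(out _ zq)].
Qed.

(* Otherwise points of [ball n y] can be picked greedily at pairwise distance at
   least [radius d n], and the resulting sequence has no convergent subsequence. *)
Lemma ball_finite_cover n y : exists s : seq {classic X},
  forall z, ball n y z -> has (fun c : {classic X} => `[< ball n.+1 c z >]) s.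
Proof.
apply: contrapT => no_cover.
have uncovered s : exists z, ball n y z /\ ~~ has (fun c => `[< ball n.+1 c z >]) s.
  apply: contrapT => covered; apply: no_cover; exists s; move=> z yz.
  by apply: contrapT => /negP sz; apply: covered; exists z; split.
have [next nextP] := choice uncovered.
pose fix prefix k := if k is k'.+1 then rcons (prefix k') (next (prefix k')) else [::].
pose u i := next (prefix i).
have prefixE k : prefix k = map u (iota 0 k).
  elim: k => [//|k IHk]; change (rcons (prefix k) (u k) = map u (iota 0 k.+1)).
  by rewrite -addn1 iotaD map_cat -IHk add0n cats1.
have u_far i j : (i < j)%N -> ~ ball n.+1 (u i) (u j).
  move=> ij uij; have := (nextP (prefix j)).2; rewrite -/(u j) prefixE has_map.
  by move=> /hasPn/(_ i); rewrite mem_iota ij => /(_ isT) /asboolPn.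
case: HX => _ dcompact _; have [phi [x [phi_incr phi_cvg]]] := dcompact u.
have [N HN] := phi_cvg _ (radius_gt0 n).
apply: (u_far _ _ (phi_incr N)); apply: ballS.
  exact: ball_trans (ball_sym (nextP _).1) (nextP _).1.
by apply: (@ultra_lt _ x); [apply: HN | rewrite d_sym; apply: HN].
Qed.

Lemma succ_vertex_atP n y (w : vertex d) :
  succ (vertex_at n y) w <-> lvl w = n.+1 /\ ball n y (point_in (vball w)).
Proof.
split=> [[lw sub_w] | [lw yw]]; first by split=> //; apply: sub_w; exact: vball_point.
split=> // z; rewrite (vertex_at_point w) lw => wz.
exact: ball_trans yw (ball_le (leqnSn n) wz).
Qed.

Lemma exists_children n y : exists ws : seq {classic vertex d},
  uniq ws /\ forall w : {classic vertex d}, w \in ws <-> succ (vertex_at n y) w.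
Proof.
have [s cover] := ball_finite_cover n y.
exists (undup [seq (vertex_at n.+1 c : {classic vertex d})
               | c : {classic X} <- s & `[< ball n y c >]]).
split=> [|w]; first exact: undup_uniq.
rewrite mem_undup succ_vertex_atP; split.
  case/mapP=> c; rewrite mem_filter => /andP[/asboolP yc _] -> /=; split=> //.
  exact: ball_trans yc (ball_le (leqnSn n) (point_inP (@ball_center _ c))).
move=> [lw yw]; have /hasP[c cs /asboolP cw] := cover _ yw.
apply/mapP; exists c.
  rewrite mem_filter cs andbT; apply/asboolP.
  exact: ball_trans yw (ball_sym (ball_le (leqnSn n) cw)).
by rewrite [w in LHS]vertex_at_point lw; apply/vertex_at_eq; exact: ball_sym.
Qed.

Definition children n y : seq {classic vertex d} := projT1 (cid (exists_children n y)).

Lemma children_uniq n y : uniq (children n y).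
Proof. exact: (projT2 (cid (exists_children n y))).1. Qed.

Lemma mem_children n y (w : {classic vertex d}) :
  w \in children n y <-> succ (vertex_at n y) w.
Proof. exact: (projT2 (cid (exists_children n y))).2. Qed.

Lemma chi_children n y z : chi (vertex_at n y) z = \sum_(w <- children n y) chi w z.
Proof.
case: (pselect (ball n y z)) => yz; last first.
  rewrite chi0 // big1_seq // => w /andP[_ /mem_children [_ sub_w]].
  by apply: chi0 => /sub_w.
have zw : (vertex_at n.+1 z : {classic vertex d}) \in children n y.
  by apply/mem_children; split=> //= t zt; exact: ball_trans yz (ball_le (leqnSn n) zt).
rewrite chi1 // (bigD1_seq _ zw (children_uniq n y)) /= chi1; last exact: ball_center.
rewrite big1_seq ?addr0 // => w /andP[ne_w /mem_children [lw _]].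
by apply: chi0 => /vertex_atP wz; rewrite wz lw eqxx in ne_w.
Qed.

Lemma CXZ_chi (v : vertex d) : CXZ d (chi v).
Proof.
move=> x; exists (radius d (lvl v)); first exact: radius_gt0.
move=> z /ball_le_radius xz; rewrite (vertex_at_point v); apply: chi_vertex_at_eq.
by split=> /ball_trans; [apply; exact: ball_sym | apply].
Qed.

Lemma CXZ_sum (I : Type) (s : seq I) (f : I -> X -> int) :
  (forall i, CXZ d (f i)) -> CXZ d (fun z => \sum_(i <- s) f i z).
Proof.
move=> Cf; elim: s => [|i s IHs] x; first by exists 1 => // z _; rewrite !big_nil.
have [e1 e1_gt0 fi_const] := Cf i x; have [e2 e2_gt0 fs_const] := IHs x.
exists (Num.min e1 e2) => [|z]; first by rewrite lt_min e1_gt0 e2_gt0.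
by rewrite lt_min => /andP[/fi_const + /fs_const]; rewrite !big_cons => -> ->.
Qed.

Section Homomorphism.
Variable phi : (X -> int) -> int.
Hypothesis Hphi : is_hom d phi.

Lemma hom_zero : phi (fun _ => 0) = 0.
Proof.
have C0 : CXZ d (fun _ => 0) by move=> x; exists 1.
have := Hphi C0 C0; rewrite [_ \+ _](_ : _ = fun _ => 0); last first.
  by apply/funext => z /=; rewrite addr0.
by move=> /(congr1 (fun t => t - phi (fun _ => 0))); rewrite subrr addrK.
Qed.

Lemma hom_sum (I : Type) (s : seq I) (f : I -> X -> int) : (forall i, CXZ d (f i)) ->
  phi (fun z => \sum_(i <- s) f i z) = \sum_(i <- s) phi (f i).
Proof.
move=> Cf; elim: s => [|i s IHs].
  by rewrite big_nil; under eq_fun do rewrite big_nil; exact: hom_zero.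
rewrite big_cons -IHs -Hphi //; last exact: CXZ_sum.
by congr phi; apply/funext => z; rewrite big_cons.
Qed.

Lemma hom_children n y : phi (chi (vertex_at n y)) = \sum_(w <- children n y) phi (chi w).
Proof.
rewrite -hom_sum; last exact: CXZ_chi.
by congr phi; apply/funext => z; exact: chi_children.
Qed.

Definition mass (v : vertex d) : int := phi (chi v).

(* The sibling of [w] that contains the value of the choice function on the
   parent of [w]. *)
Definition anchor_sibling (w : vertex d) : vertex d :=
  vertex_at (lvl w) (anchor (lvl w).-1 (point_in (vball w))).

Definition edge_mult (w : vertex d) : nat :=
  if (0 < lvl w)%N && `[< w <> anchor_sibling w >] then `|mass w|%N else 0.

(* [edge_mult w] parallel copies of the edge between [w] and its anchor sibling,
   oriented by [edge_ends] so that together they contribute [mass w] times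
   the difference of the values at [w] and at its anchor sibling. *)
Definition edge := {p : {classic vertex d} * nat | (p.2 < edge_mult p.1)%N}.

Definition edge_ends (w : vertex d) : vertex d * vertex d :=
  if 0 < mass w then (w, anchor_sibling w) else (anchor_sibling w, w).

Definition edge_src (e : edge) : vertex d := (edge_ends (val e).1).1.
Definition edge_rng (e : edge) : vertex d := (edge_ends (val e).1).2.

Lemma tau_anchor_sibling n (w : vertex d) : lvl w = n.+1 ->
  tau_anchor (anchor_sibling w) = anchor n (point_in (vball w)).
Proof. by rewrite /anchor_sibling => ->; rewrite tau_anchor_at anchor_anchor. Qed.

Lemma horizontal_sym (a b : vertex d) : horizontal a b -> horizontal b a.
Proof. by case=> v [va vb ab]; exists v; split=> // /esym. Qed.

Lemma horizontal_anchor_sibling (w : vertex d) : (0 < lvl w)%N ->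
  w <> anchor_sibling w -> horizontal w (anchor_sibling w).
Proof.
case lw: (lvl w) => [//|n] _ ne_w; exists (vertex_at n (point_in (vball w))); split=> //.
- by apply/succ_vertex_atP; split=> //; exact: ball_center.
- rewrite /anchor_sibling lw /=; split=> // z /= /(ball_le (leqnSn n)).
  exact: ball_trans (@anchor_in n _).
Qed.

Lemma edge_mult_gt0 (w : vertex d) : (0 < edge_mult w)%N ->
  (0 < lvl w)%N /\ w <> anchor_sibling w.
Proof. by rewrite /edge_mult; case: ifP => // /andP[lw /asboolP]. Qed.

Lemma edge_horizontal (e : edge) : horizontal (edge_src e) (edge_rng e).
Proof.
case: e => -[w j] /= hj; have [lw ne_w] := edge_mult_gt0 (leq_ltn_trans (leq0n j) hj).
rewrite /edge_src /edge_rng /edge_ends /=.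
by case: ifP => _; last apply: horizontal_sym; exact: horizontal_anchor_sibling.
Qed.

Section Evaluation.
Variables (m : nat) (y : X).
Local Notation chi_v := (chi (vertex_at m y)).

Definition edge_flow (w : vertex d) : int :=
  chi_v (tau_anchor (edge_ends w).1) - chi_v (tau_anchor (edge_ends w).2).

Lemma edge_flow_far n (w : vertex d) : lvl w = n.+1 ->
  (m <= n)%N \/ ~ ball n y (point_in (vball w)) -> edge_flow w = 0.
Proof.
move=> lw far; suff eq_w : chi_v (tau_anchor (anchor_sibling w)) = chi_v (tau_anchor w).
  by rewrite /edge_flow /edge_ends; case: ifP => _ /=; rewrite eq_w subrr.
rewrite (tau_anchor_sibling lw); apply: (chi_const_ball far); first exact: anchor_in.
have := tau_anchor_choice.1 w; rewrite /passes {1}(vertex_at_point w) lw.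
exact: ball_le (leqnSn n).
Qed.

Lemma sum_edge_copies (w : vertex d) : (0 < lvl w)%N ->
  \sum_(0 <= j < edge_mult w) edge_flow w =
  mass w * (chi_v (tau_anchor w) - chi_v (tau_anchor (anchor_sibling w))).
Proof.
move=> lw; rewrite sumr_const_nat subn0 /edge_mult lw /=.
case: asboolP => [_ | /contrapT eq_w]; last by rewrite mulr0n -eq_w subrr mulr0.
rewrite -mulr_natl natz abszE /edge_flow /edge_ends.
by case: (ltrgt0P (mass w)) => [//|_|->]; rewrite ?mul0r // mulNr -mulrN opprB.
Qed.

Lemma sum_children_chi n : (n < m)%N ->
  \sum_(w <- children n y) mass w * chi_v (tau_anchor w) =
  mass (vertex_at n.+1 y) * chi_v (anchor n.+1 y).
Proof.
move=> nm; have yw : (vertex_at n.+1 y : {classic vertex d}) \in children n y.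
  apply/mem_children/succ_vertex_atP; split=> //.
  exact: ball_le (point_inP (@ball_center n.+1 y)).
rewrite (bigD1_seq _ yw (children_uniq n y)) /= tau_anchor_at big1_seq ?addr0 //.
move=> w /andP[ne_w /mem_children/succ_vertex_atP[lw _]].
rewrite chi0 ?mulr0 // => /= /(ball_le nm) y_tau; move/eqP: ne_w; apply.
rewrite (vertex_atP (tau_anchor_choice.1 w)) lw; apply/vertex_at_eq; exact: ball_sym.
Qed.

Lemma sum_children_chi_sibling n :
  \sum_(w <- children n y) mass w * chi_v (tau_anchor (anchor_sibling w)) =
  mass (vertex_at n y) * chi_v (anchor n y).
Proof.
rewrite /mass hom_children big_distrl /=; apply: eq_big_seq => w.
by move=> /mem_children/succ_vertex_atP[lw yw]; rewrite (tau_anchor_sibling lw) (anchor_ball yw).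
Qed.

Definition ancestor_term k : int := mass (vertex_at k y) * chi_v (anchor k y).

Lemma sum_level_edges n : (n < m)%N ->
  \sum_(w <- children n y) \sum_(0 <= j < edge_mult w) edge_flow w =
  ancestor_term n.+1 - ancestor_term n.
Proof.
move=> nm; rewrite /ancestor_term -sum_children_chi // -sum_children_chi_sibling -sumrB.
apply: eq_big_seq => w /mem_children/succ_vertex_atP[lw _].
by rewrite sum_edge_copies ?lw // mulrBr.
Qed.

Definition ancestor_children : seq {classic vertex d} :=
  [seq w | n <- index_iota 0 m, w <- children n y].

Lemma ancestor_children_uniq : uniq ancestor_children.
Proof.
apply: allpairs_uniq_dep => [|n _|]; [exact: iota_uniq | exact: children_uniq |].
move=> [n1 w1] [n2 w2] /allpairsPdep[n1' [w1' [_ w1_in [-> ->]]]].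
move=> /allpairsPdep[n2' [w2' [_ w2_in [-> ->]]]] /= eq_w; subst w2'.
have /mem_children/succ_vertex_atP[lw1 _] := w1_in.
have /mem_children/succ_vertex_atP[+ _] := w2_in.
by rewrite lw1 => -[->].
Qed.

Definition support_edges : seq edge :=
  pmap insub [seq ((w, j) : {classic vertex d} * nat)
               | w <- ancestor_children, j <- index_iota 0 (edge_mult w)].

Lemma support_edges_uniq : uniq support_edges.
Proof.
apply: pmap_sub_uniq; apply: allpairs_uniq_dep => [|w _|].
- exact: ancestor_children_uniq.
- exact: iota_uniq.
- by move=> [w1 j1] [w2 j2] _ _ /= [eq_w eq_j]; subst.
Qed.

Lemma mem_support_edges (e : edge) : edge_flow (val e).1 != 0 -> e \in support_edges.
Proof.
case: e => -[w j] /= j_lt flow_w; rewrite mem_pmap_sub /=.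
have [+ _] := edge_mult_gt0 (leq_ltn_trans (leq0n j) j_lt).
case lw: (lvl w) => [//|n] _.
have [nm | mn] := ltnP n m; last by rewrite (edge_flow_far lw (or_introl mn)) eqxx in flow_w.
have [yw | ny] := pselect (ball n y (point_in (vball w))); last first.
  by rewrite (edge_flow_far lw (or_intror ny)) eqxx in flow_w.
apply/allpairsPdep; exists w, j; split=> //; last by rewrite mem_index_iota.
apply/allpairsPdep; exists n, w; rewrite mem_index_iota; split=> //.
exact/mem_children/succ_vertex_atP.
Qed.

Lemma sum_support_edges :
  \sum_(e <- support_edges) edge_flow (val e).1 =
  \sum_(0 <= n < m) \sum_(w <- children n y) \sum_(0 <= j < edge_mult w) edge_flow w.
Proof.
rewrite big_pmap big_allpairs_dep /= big_allpairs_dep /=.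
apply: eq_big_seq => n _; apply: eq_big_seq => w _; apply: eq_big_seq => j.
by rewrite mem_index_iota => /andP[_ j_lt]; rewrite (@insubT _ _ _ (w, j) j_lt).
Qed.

Hypothesis phi1 : phi (fun _ => 1) = 0.

Lemma mass_root x : mass (vertex_at 0 x) = 0.
Proof. by rewrite /mass -phi1; congr phi; apply/funext => z; apply: chi1 => k; rewrite ltn0. Qed.

Lemma hom_chi_sum_support_edges : phi chi_v = \sum_(e <- support_edges) edge_flow (val e).1.
Proof.
rewrite sum_support_edges (telescope_sumr_eq ancestor_term) //; last first.
  by move=> n /andP[_ nm]; exact: sum_level_edges.
by rewrite /ancestor_term mass_root mul0r subr0 chi1 ?mulr1 //; exact: anchor_in.
Qed.

Lemma support_edges_finite : finite_set
  [set e : edge | chi_v (tau_anchor (edge_src e)) <> chi_v (tau_anchor (edge_rng e))].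
Proof.
apply: sub_finite_set (finite_seq support_edges) => e /= ne_e.
by apply: mem_support_edges; rewrite /edge_flow subr_eq0; exact/eqP.
Qed.

Lemma hom_chi_phi_tauH : phi chi_v = phi_tauH edge_src edge_rng tau_anchor (vertex_at m y).
Proof.
rewrite hom_chi_sum_support_edges /phi_tauH (fsbigE support_edges) //=.
- by apply: eq_bigl => e; rewrite in_setT.
- exact: support_edges_uniq.
- by move=> e _; apply: contraNeq; exact: mem_support_edges.
Qed.

End Evaluation.
End Homomorphism.
End CompactUltrametric.

Theorem proposition7p3 (R : realType) (X : Type) (d : X -> X -> R)
  (HX : compact_ultrametric_space d)
  (phi : (X -> int) -> int) (Hphi : is_hom d phi) (Hphi1 : phi (fun _ => 1) = 0) :
  exists (E : choiceType) (s r : E -> vertex d) (tau : vertex d -> X),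
    [/\ choice_function tau,
        (forall e, horizontal (s e) (r e)),
        (forall v : vertex d, finite_set [set e | chi v (tau (s e)) <> chi v (tau (r e))]) &
        (forall v : vertex d, phi (chi v) = phi_tauH s r tau v)].
Proof.
have [_ _ [f _]] := HX; set x0 := f 0%N.
exists (edge d x0 phi), (@edge_src _ _ d x0 phi), (@edge_rng _ _ d x0 phi), (tau_anchor x0).
split=> [||v|v]; first exact: tau_anchor_choice.
- exact: edge_horizontal.
- by rewrite (vertex_at_point HX x0 v); exact: support_edges_finite.
- by rewrite (vertex_at_point HX x0 v); exact: hom_chi_phi_tauH.
Qed.
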